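(* If a Banach space $X$ has a seminormalized (Schauder) basis $(e_n)$ which dominates each of its subsequences (i.e., for every increasing sequence $(k_n)$ of positive integers, $(e_n)$ dominates $(e_{k_n})$), then $\mathcal{L}(X)$ is non-separable.
   Context: $\mathcal{L}(X)$ is the space of all bounded linear operators on $X$ with the operator norm. A sequence $(e_n)$ is seminormalized if $0<\inf_n\|e_n\|\le\sup_n\|e_n\|<\infty$. $(x_n)$ dominates $(y_n)$ if there is $C>0$ with $\|\sum a_ny_n\|\le C\|\sum a_nx_n\|$ for all finitely supported scalar sequences $(a_n)$. *)

From mathcomp Require Import all_boot all_order all_algebra.
From mathcomp Require Import all_classical all_reals all_analysis.
Set Implicit Arguments. Unset Strict Implicit. Unset Printing Implicit Defensive.
Import Order.TTheory GRing.Theory Num.Theory.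
Import numFieldNormedType.Exports.
Local Open Scope ring_scope.
Local Open Scope classical_set_scope.

Section Defs.
Context {R : realType} {X : normedModType R}.

Definition psum (a : nat -> R) (e : nat -> X) (N : nat) : X :=
  \sum_(i < N) a i *: e i.

Definition schauder_basis (e : nat -> X) : Prop :=
  forall x : X, exists! a : nat -> R, psum a e @ \oo --> x.

Definition seminormalized (e : nat -> X) : Prop :=
  exists c C : R, 0 < c /\ forall n, c <= `|e n| <= C.

(* (x_n) dominates (y_n): ||sum a_n y_n|| <= C ||sum a_n x_n|| for finitely
   supported (a_n); a finitely supported sequence is supported in [0,N). *)
Definition dominates (x y : nat -> X) : Prop :=
  exists C : R, 0 < C /\
    forall (N : nat) (a : nat -> R), `|psum a y N| <= C * `|psum a x N|.

Definition bounded_op (T : X -> X) : Prop :=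
  linear T /\ exists C : R, forall x, `|T x| <= C * `|x|.

(* L(X) with the operator norm is separable: there is a countable family
   (D n) in L(X) such that every T in L(X) is within eps (in operator norm)
   of some D n; ||T - S|| <= eps  iff  forall x, ||T x - S x|| <= eps ||x||. *)
Definition opspace_separable : Prop :=
  exists D : nat -> X -> X, (forall n, bounded_op (D n)) /\
    forall T, bounded_op T -> forall eps : R, 0 < eps ->
      exists n, forall x, `|T x - D n x| <= eps * `|x|.
End Defs.
Arguments opspace_separable {R} X.

From mathcomp Require Import all_boot all_order all_algebra.
From mathcomp Require Import all_classical all_reals all_analysis.
From mathcomp Require Import ring lra.
Set Implicit Arguments.
Import Order.TTheory GRing.Theory Num.Theory.
Import numFieldNormedType.Exports.
Local Open Scope ring_scope.
Local Open Scope classical_set_scope.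

(* For strictly increasing k, domination of (e_(k n)) by (e_n) makes
   sum a_n e_n |-> sum a_n e_(k n) a bounded operator T_k with T_k e_n = e_(k n).
   For the shift k n = n + 1 this shows that (e_n) has no limit: a limit y is
   fixed by T_k, whose action on coordinates is a shift, so every coordinate of
   y vanishes, y = 0, against inf ||e_n|| > 0.  Hence (e_n) is not Cauchy and
   there are p_0 < q_0 < p_1 < q_1 < ... with ||e_(p_n) - e_(q_n)|| >= d.
   Choosing p_n or q_n according to b : nat -> bool yields uncountably many
   operators T_b at pairwise distance >= d / sup ||e_n||, which no countable
   family of operators can approximate. *)

Section PartialSums.
Variables (R : realType) (X : normedModType R).
Implicit Types (a b : nat -> R) (y : nat -> X).

Lemma psum_series a y : psum a y = series (fun i => a i *: y i).
Proof. by apply/funext => N; rewrite /psum /series /= big_mkord. Qed.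

Lemma psum_linear r a b y N :
  psum (fun i => r * a i + b i) y N = r *: psum a y N + psum b y N.
Proof.
rewrite /psum scaler_sumr -big_split /=; apply: eq_bigr => i _.
by rewrite scalerDl scalerA.
Qed.

Lemma psum_delta y n N : (n < N)%N ->
  psum (fun i => if i == n then 1 else 0) y N = y n.
Proof.
move=> ltnN; rewrite /psum (bigD1 (Ordinal ltnN)) //= eqxx scale1r big1 ?addr0 //.
move=> i /eqP neq_in; case: eqP => [eq_in|_]; last by rewrite scale0r.
by case: neq_in; apply/val_inj.
Qed.

Lemma sum_nat_psum a y m n :
  \sum_(m <= i < n) a i *: y i = psum (fun i => if (m <= i)%N then a i else 0) y n.
Proof.
rewrite big_geq_mkord /psum big_mkcond /=; apply: eq_bigr => i _.
by case: (m <= i)%N; rewrite ?scale0r.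
Qed.

Lemma dominates_sum_nat y z : dominates y z -> exists2 C : R, 0 < C &
  forall a m n, `|\sum_(m <= i < n) a i *: z i| <= C * `|\sum_(m <= i < n) a i *: y i|.
Proof. by move=> [C [C_gt0 dom]]; exists C => // a m n; rewrite !sum_nat_psum. Qed.

End PartialSums.

Lemma bool_seq_not_inj_nat (f : (nat -> bool) -> nat) : ~ injective f.
Proof.
move=> f_inj; pose d j := ~~ `[< exists b, f b = j /\ b j >].
have d_anti : d (f d) = ~~ d (f d).
  rewrite {1}/d; congr (~~ _).
  by apply/idP/idP => [/asboolP [b [/f_inj ->]] // | d_fd]; apply/asboolP; exists d.
by move: d_anti; case: (d (f d)).
Qed.

Lemma interleaved_pairs {P : nat -> nat -> Prop} :
    (forall N, exists i j, [/\ (N <= i)%N, (i < j)%N & P i j]) ->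
  exists p q : nat -> nat,
    forall n, [/\ (p n < q n)%N, (q n < p n.+1)%N & P (p n) (q n)].
Proof.
move=> P_far.
have /choice [g g_far] : forall N, exists ij : nat * nat,
    [/\ (N <= ij.1)%N, (ij.1 < ij.2)%N & P ij.1 ij.2].
  by move=> N; have [i [j ?]] := P_far N; exists (i, j).
pose fix start n := if n is n'.+1 then (g (start n')).2.+1 else 0%N.
exists (fun n => (g (start n)).1), (fun n => (g (start n)).2) => n.
have [_ lt_pq P_pq] := g_far (start n); have [le_q_p _ _] := g_far (start n.+1).
by split.
Qed.

Definition pick_seq (p q : nat -> nat) (b : nat -> bool) (n : nat) : nat :=
  if b n then q n else p n.

Lemma pick_seq_increasing (p q : nat -> nat) (b : nat -> bool) :
    (forall n, p n < q n)%N -> (forall n, q n < p n.+1)%N ->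
  forall n, (pick_seq p q b n < pick_seq p q b n.+1)%N.
Proof.
move=> lt_pq lt_qp n; apply: (@leq_ltn_trans (q n)).
  by rewrite /pick_seq; case: (b n) => //; exact: ltnW.
by apply: (leq_trans (lt_qp n)); rewrite /pick_seq; case: (b n.+1) => //; exact: ltnW.
Qed.

Lemma not_cvg_separated {R : realType} {X : completeNormedModType R}
    (u : nat -> X) : ~ cvg (u @ \oo) ->
  exists2 d : R, 0 < d &
    forall N, exists i j, [/\ (N <= i)%N, (i < j)%N & d <= `|u i - u j|].
Proof.
move=> u_ncvg; apply: contrapT => not_sep; apply: u_ncvg.
apply/cauchy_cvgP/cauchy_exP => eps eps_gt0.
have /existsNP [N near_N] : ~ forall N, exists i j,
    [/\ (N <= i)%N, (i < j)%N & eps <= `|u i - u j|].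
  by move=> far; apply: not_sep; exists eps.
exists (u N), N => // n /= le_Nn; rewrite -ball_normE /ball_ /=.
move: le_Nn; rewrite leq_eqVlt => /orP[/eqP <-|lt_Nn]; first by rewrite subrr normr0.
by rewrite ltNge; apply/negP => far; apply: near_N; exists N, n.
Qed.

Lemma separated_ops_inj_nat {R : realType} {X : normedModType R} {I : Type}
    (T : I -> X -> X) {eps : R} :
    0 < eps -> opspace_separable X -> (forall i, bounded_op (T i)) ->
    (forall i j, i <> j -> exists x, 2 * eps * `|x| < `|T i x - T j x|) ->
  exists f : I -> nat, injective f.
Proof.
move=> eps_gt0 [D [_ D_dense]] T_bounded T_sep.
have /choice [f f_near] : forall i, exists n, forall x,
    `|T i x - D n x| <= eps * `|x|.
  by move=> i; exact: D_dense.
exists f => i j f_ij; apply: contrapT => neq_ij.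
have [x far] := T_sep i j neq_ij.
have near_i := f_near i x; have near_j := f_near j x; rewrite -f_ij in near_j.
have := ler_normB (T i x - D (f i) x) (T j x - D (f i) x).
rewrite opprB addrA subrK; move: far; lra.
Qed.

Section SchauderBasis.
Variables (R : realType) (X : completeNormedModType R) (e : nat -> X).
Hypothesis e_basis : schauder_basis e.

Lemma basis_expansion (x : X) : exists a, psum a e @ \oo --> x.
Proof. by have [a [a_x _]] := e_basis x; exists a. Qed.

Definition coord (x : X) : nat -> R := projT1 (cid (basis_expansion x)).

Lemma coordP x : psum (coord x) e @ \oo --> x.
Proof. exact: projT2 (cid (basis_expansion x)). Qed.

Lemma coord_unique x a : psum a e @ \oo --> x -> a = coord x.
Proof.
move=> a_x; have [b [_ b_unique]] := e_basis x.
by rewrite -(b_unique _ a_x) -(b_unique _ (coordP x)).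
Qed.

Lemma coord_linear r x z :
  coord (r *: x + z) = (fun i => r * coord x i + coord z i).
Proof.
apply/esym/coord_unique.
rewrite (_ : psum _ e = fun N => r *: psum (coord x) e N + psum (coord z) e N).
  by apply: cvgD; [apply: cvgZl_tmp |]; exact: coordP.
by apply/funext => N; rewrite psum_linear.
Qed.

Lemma coord_basis n : coord (e n) = (fun i => if i == n then 1 else 0).
Proof.
apply/esym/coord_unique; apply: cvg_near_cst.
by exists n.+1 => // N /= ltnN; rewrite psum_delta.
Qed.

Lemma coord_eq0 x : (forall i, coord x i = 0) -> x = 0.
Proof.
move=> coord_x0; rewrite -(norm_cvg_lim (coordP x)).
rewrite (_ : psum _ e = fun=> 0) ?lim_cst //.
by apply/funext => N; rewrite /psum big1 // => i _; rewrite coord_x0 scale0r.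
Qed.

Section SubsequenceOperator.
Variable k : nat -> nat.

Definition subseq_op (x : X) : X := lim (psum (coord x) (fun n => e (k n)) @ \oo).

Lemma subseq_op_basis n : subseq_op (e n) = e (k n).
Proof.
apply: norm_cvg_lim; rewrite coord_basis; apply: cvg_near_cst.
by exists n.+1 => // N /= ltnN; rewrite psum_delta.
Qed.

Hypothesis k_dom : dominates e (fun n => e (k n)).

Lemma subseq_opP x : psum (coord x) (fun n => e (k n)) @ \oo --> subseq_op x.
Proof.
have [C C_gt0 dom] := dominates_sum_nat k_dom.
suff : cauchy (psum (coord x) (fun n => e (k n)) @ \oo) by move/cauchy_cvgP.
rewrite psum_series; apply/cauchy_seriesP => eps eps_gt0.
have : cauchy (series (fun i => coord x i *: e i) @ \oo).
  by apply: cvg_cauchy; rewrite -psum_series; exact: cvgP (coordP x).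
move/cauchy_seriesP/(_ _ (divr_gt0 eps_gt0 C_gt0)); apply: filterS => -[m n] /= small.
by rewrite (le_lt_trans (dom _ m n)) // -ltr_pdivlMl // mulrC.
Qed.

Lemma subseq_op_bound : exists2 C : R, 0 < C & forall x, `|subseq_op x| <= C * `|x|.
Proof.
have [C [C_gt0 dom]] := k_dom; exists C => // x.
have Tx_norm : `|psum (coord x) (fun n => e (k n)) n| @[n --> \oo] --> `|subseq_op x|.
  exact: cvg_norm (subseq_opP x).
have x_norm : C * `|psum (coord x) e n| @[n --> \oo] --> C * `|x|.
  by apply: cvgMl_tmp; apply: cvg_norm; exact: coordP.
by apply: (ler_cvg_to Tx_norm x_norm); apply: nearW.
Qed.

Lemma subseq_op_linear : linear subseq_op.
Proof.
move=> r x z; apply: norm_cvg_lim; rewrite coord_linear.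
rewrite (_ : psum _ _ = fun N => r *: psum (coord x) (fun n => e (k n)) N
   + psum (coord z) (fun n => e (k n)) N).
  by apply: cvgD; [apply: cvgZl_tmp |]; exact: subseq_opP.
by apply/funext => N; rewrite psum_linear.
Qed.

Lemma subseq_op_bounded : bounded_op subseq_op.
Proof.
split; first exact: subseq_op_linear.
by have [C _ bound] := subseq_op_bound; exists C.
Qed.

Lemma subseq_opB x z : subseq_op (x - z) = subseq_op x - subseq_op z.
Proof. by rewrite addrC -scaleN1r subseq_op_linear scaleN1r addrC. Qed.

Lemma subseq_op_fixed y :
  e @ \oo --> y -> (fun n => e (k n)) @ \oo --> y -> subseq_op y = y.
Proof.
move=> e_y ek_y; have [C C_gt0 bound] := subseq_op_bound.
suff ek_Ty : (fun n => e (k n)) @ \oo --> subseq_op y.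
  by rewrite -(norm_cvg_lim ek_Ty) (norm_cvg_lim ek_y).
apply/cvgrPdist_le => eps eps_gt0.
move/cvgrPdist_le: e_y => /(_ _ (divr_gt0 eps_gt0 C_gt0)); apply: filterS => n small.
rewrite -subseq_op_basis -subseq_opB (le_trans (bound _)) //.
by rewrite -ler_pdivlMl // mulrC.
Qed.

End SubsequenceOperator.

Lemma coord_shift x : dominates e (fun n => e n.+1) ->
  coord (subseq_op S x) = (fun i => if i is j.+1 then coord x j else 0).
Proof.
move=> dom; apply/esym/coord_unique; rewrite -cvg_shiftS /=.
rewrite (_ : (fun n => _) = psum (coord x) (fun n => e n.+1)); first exact: subseq_opP.
by apply/funext => N; rewrite /psum big_ord_recl /= scale0r add0r.
Qed.

Lemma basis_not_cvg (c : R) : dominates e (fun n => e n.+1) ->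
  0 < c -> (forall n, c <= `|e n|) -> ~ cvg (e @ \oo).
Proof.
move=> dom c_gt0 c_le e_cvg; set y := lim (e @ \oo) in e_cvg.
have Ty : subseq_op S y = y by apply: subseq_op_fixed => //; rewrite cvg_shiftS.
have coord_y0 i : coord y i = 0.
  have := coord_shift y dom; rewrite Ty => shift.
  by elim: i => [|i IH]; rewrite shift //= IH.
have : `|e n| @[n --> \oo] --> `|y| by apply: cvg_norm.
rewrite (coord_eq0 y coord_y0) normr0 => e_norm0.
have : c <= 0 by apply: (ler_cvg_to (cvg_cst c) e_norm0); apply: nearW.
by rewrite leNgt c_gt0.
Qed.

Lemma pick_seq_ops_separated (p q : nat -> nat) (d C : R) :
    0 < d -> 0 < C -> (forall n, `|e n| <= C) ->
    (forall n, d <= `|e (p n) - e (q n)|) ->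
  forall b1 b2 : nat -> bool, b1 <> b2 -> exists x, 2 * (d / (3 * C)) * `|x| <
    `|subseq_op (pick_seq p q b1) x - subseq_op (pick_seq p q b2) x|.
Proof.
move=> d_gt0 C_gt0 le_C far_pq b1 b2 neq_b.
have /existsNP [n neq_n] : ~ forall n, b1 n = b2 n by move=> eq_b; apply/neq_b/funext.
exists (e n); rewrite !subseq_op_basis.
have far_n : d <= `|e (pick_seq p q b1 n) - e (pick_seq p q b2 n)|.
  by rewrite /pick_seq; move: neq_n; case: (b1 n); case: (b2 n); rewrite // distrC.
apply: lt_le_trans far_n.
have : `|e n| * (d / (3 * C)) <= C * (d / (3 * C)) by rewrite ler_pM2r ?divr_gt0 ?mulr_gt0.
have -> : C * (d / (3 * C)) = d / 3 by field; rewrite gt_eqF.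
by move: d_gt0; lra.
Qed.

End SchauderBasis.

Theorem proposition2p3 (R : realType) (X : completeNormedModType R)
  (e : nat -> X) :
  schauder_basis e -> seminormalized e ->
  (forall k : nat -> nat, (forall n, (k n < k n.+1)%N) ->
     dominates e (fun n => e (k n))) ->
  ~ opspace_separable X.
Proof.
move=> e_basis [c [C [c_gt0 e_bounds]]] e_dom op_sep.
have c_le n : c <= `|e n| by have /andP[] := e_bounds n.
have le_C n : `|e n| <= C by have /andP[] := e_bounds n.
have C_gt0 : 0 < C := lt_le_trans c_gt0 (le_trans (c_le 0%N) (le_C 0%N)).
have e_ncvg := basis_not_cvg e_basis c (e_dom S (fun n => ltnSn _)) c_gt0 c_le.
have [d d_gt0 e_far] := not_cvg_separated e_ncvg.
have [p [q pq]] := interleaved_pairs e_far.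
have eps_gt0 : 0 < d / (3 * C) by rewrite divr_gt0 ?mulr_gt0.
have [f f_inj] : exists f : (nat -> bool) -> nat, injective f.
  apply: (separated_ops_inj_nat (fun b => subseq_op e_basis (pick_seq p q b))
    eps_gt0 op_sep); last first.
    by apply: pick_seq_ops_separated => // n; have [] := pq n.
  move=> b; apply/subseq_op_bounded/e_dom.
  by apply: pick_seq_increasing => n; have [] := pq n.
exact: bool_seq_not_inj_nat f_inj.
Qed.
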